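(* Let $K$ be a field, $\mathcal A$ a $K$-algebra and $V$ a $K$-subspace of $\mathcal A$. Then the following two statements are equivalent: (1) every element of $\sqrt V$ which is algebraic over $K$ is either nilpotent or invertible in $\mathcal A$; (2) $V$ contains no non-trivial idempotent of $\mathcal A$.
   Context: All algebras are associative with identity $1$ (not necessarily commutative). For a subset $S\subseteq\mathcal A$, the radical $\sqrt S$ is the set of $a\in\mathcal A$ such that $a^m\in S$ for all sufficiently large $m$. An idempotent is an element $e$ with $e^2=e$; it is non-trivial if $e\neq 0$ and $e\neq 1$. *)

From mathcomp Require Import all_boot all_algebra.
Set Implicit Arguments. Unset Strict Implicit. Unset Printing Implicit Defensive.
Import GRing.Theory.
Local Open Scope ring_scope.

Definition radical (R : nzRingType) (S : {pred R}) : R -> Prop :=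
  fun a => exists N : nat, forall m : nat, (N <= m)%N -> a ^+ m \in S.

Definition algebraic_over (K : fieldType) (A : algType K) (a : A) : Prop :=
  exists p : {poly K}, p != 0 /\ horner_alg a p = 0.

Definition is_nilpotent (R : nzRingType) (a : R) : Prop :=
  exists n : nat, a ^+ n = 0.

Definition is_invertible (R : nzRingType) (a : R) : Prop :=
  exists b : R, a * b = 1 /\ b * a = 1.

Definition nontrivial_idempotent (R : nzRingType) (e : R) : Prop :=
  e * e = e /\ e != 0 /\ e != 1.

From mathcomp Require Import all_boot all_algebra.
Set Implicit Arguments.
Unset Strict Implicit.
Unset Printing Implicit Defensive.
Import GRing.Theory.
Local Open Scope ring_scope.

(* A non-trivial idempotent lies in its own radical and is a root of X^2 - X,
   yet it is neither nilpotent nor invertible.  Conversely, factor an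
   annihilating polynomial of a as q X^n with q(0) != 0; for k > n the Bezout
   identity u q + v X^k = 1 yields the idempotent e = v(a) a^k, which lies in V
   once a^k does.  If e = 0 then a^k = 0, and if e = 1 then a is invertible. *)

Section Idempotent.
Variables (R : nzRingType) (e : R).
Hypothesis e_idem : e * e = e.

Lemma idempotent_exprS n : e ^+ n.+1 = e.
Proof. by elim: n => [|n IHn]; rewrite ?expr1 // exprS IHn. Qed.

Lemma idempotent_nilpotent_eq0 : is_nilpotent e -> e = 0.
Proof.
case=> -[|n]; first by move/eqP; rewrite oner_eq0.
by rewrite idempotent_exprS.
Qed.

Lemma idempotent_invertible_eq1 : is_invertible e -> e = 1.
Proof. by case=> b [eb _]; rewrite -eb -{2}e_idem -mulrA eb mulr1. Qed.

Lemma idempotent_radical (S : {pred R}) : e \in S -> radical S e.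
Proof. by move=> eS; exists 1%N => -[|m] // _; rewrite idempotent_exprS. Qed.

End Idempotent.

Lemma idempotent_algebraic (K : fieldType) (A : algType K) (e : A) :
  e * e = e -> algebraic_over e.
Proof.
move=> e_idem; exists ('X * ('X - 1%:P)); split.
  by rewrite mulf_neq0 ?polyX_eq0 ?polyXsubC_eq0.
by rewrite rmorphM rmorphB /= horner_algX horner_algC scale1r mulrBr mulr1 e_idem subrr.
Qed.

Section HornerAlg.
Variables (K : fieldType) (A : algType K) (a : A).

Lemma radical_horner_mulXn (V : {pred A}) : submod_closed V -> radical V a ->
  exists N, forall (r : {poly K}) k, (N <= k)%N -> horner_alg a (r * 'X^k) \in V.
Proof.
case=> V0 VZD [N aV]; exists N => r; elim/poly_ind: r => [|r c IHr] k Nk.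
  by rewrite mul0r rmorph0.
rewrite mulrDl rmorphD /= -mulrA -exprS addrC.
have -> : horner_alg a (c%:P * 'X^k) = c *: a ^+ k.
  by rewrite rmorphM rmorphXn /= horner_algC horner_algX mulr_algl.
by rewrite VZD ?aV // IHr ?leqW.
Qed.

Lemma algebraic_comaximal_Xn : algebraic_over a -> forall N,
  exists k (u v : {poly K}),
    [/\ (N < k)%N, u + v * 'X^k = 1 & horner_alg a (u * 'X^k) = 0].
Proof.
case=> p [p0 pa] N; have [n [q /implyP/(_ p0) q0 pE]] := multiplicity_XsubC p 0.
rewrite polyC0 subr0 in pE.
have /Bezout_eq1_coprimepP[[w v] /= wv] : coprimep q ('X ^+ (n + N).+1).
  by apply: coprimep_expr; rewrite -[X in coprimep _ X]subr0 -polyC0 coprimep_XsubC.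
exists (n + N).+1, (w * q), v; split=> //; first by rewrite ltnS leq_addl.
by rewrite -mulrA -addnS exprD (mulrA q) -pE !rmorphM /= pa mul0r mulr0.
Qed.

Section ComaximalXn.
Variables (k : nat) (u v : {poly K}).
Hypotheses (k_gt0 : (0 < k)%N) (uv : u + v * 'X^k = 1) (ua : horner_alg a (u * 'X^k) = 0).

Lemma comaximal_Xn_compl : horner_alg a u = 1 - horner_alg a (v * 'X^k).
Proof. by rewrite -(rmorph1 (horner_alg a)) -uv rmorphD addrK. Qed.

Lemma comaximal_Xn_idempotent :
  horner_alg a (v * 'X^k) * horner_alg a (v * 'X^k) = horner_alg a (v * 'X^k).
Proof.
have : horner_alg a (v * 'X^k * u) = 0 by rewrite mulrAC -mulrA rmorphM /= ua mulr0.
rewrite rmorphM /= comaximal_Xn_compl mulrBr mulr1 => /eqP.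
by rewrite subr_eq0 eq_sym => /eqP.
Qed.

Lemma comaximal_Xn_eq0_nilpotent : horner_alg a (v * 'X^k) = 0 -> is_nilpotent a.
Proof.
have ua_k : horner_alg a u * a ^+ k = 0 by rewrite -ua rmorphM rmorphXn /= horner_algX.
by move=> e0; exists k; rewrite -ua_k comaximal_Xn_compl e0 subr0 mul1r.
Qed.

Lemma comaximal_Xn_eq1_invertible : horner_alg a (v * 'X^k) = 1 -> is_invertible a.
Proof.
have vXk : v * 'X^k = 'X * (v * 'X^(k.-1)) by rewrite mulrCA -exprS prednK.
move=> e1; exists (horner_alg a (v * 'X^(k.-1))).
split; rewrite -e1 vXk; first by rewrite [in RHS]rmorphM /= horner_algX.
by rewrite [in RHS]mulrC [in RHS]rmorphM /= horner_algX.
Qed.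

End ComaximalXn.
End HornerAlg.

Theorem theorem3p5 (K : fieldType) (A : algType K) (V : {pred A})
    (HV : submod_closed V) :
  (forall a : A, radical V a -> algebraic_over a ->
     is_nilpotent a \/ is_invertible a)
  <-> ~ (exists e : A, e \in V /\ nontrivial_idempotent e).
Proof.
split.
  move=> nil_or_inv [e [eV [e_idem [e0 e1]]]].
  have [/(idempotent_nilpotent_eq0 e_idem)|/(idempotent_invertible_eq1 e_idem)] :=
    nil_or_inv e (idempotent_radical e_idem eV) (idempotent_algebraic e_idem).
    exact/eqP.
  exact/eqP.
move=> no_idem a aV a_alg.
have [N hornerV] := radical_horner_mulXn HV aV.
have [k [u [v [Nk uv ua]]]] := algebraic_comaximal_Xn a_alg N.
have k_gt0 : (0 < k)%N by apply: leq_ltn_trans Nk.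
have e_idem := comaximal_Xn_idempotent uv ua.
have [e0|e0] := eqVneq (horner_alg a (v * 'X^k)) 0.
  by left; apply: comaximal_Xn_eq0_nilpotent ua e0.
have [e1|e1] := eqVneq (horner_alg a (v * 'X^k)) 1.
  by right; apply: comaximal_Xn_eq1_invertible k_gt0 e1.
case: no_idem; exists (horner_alg a (v * 'X^k)).
by split; [exact: hornerV (ltnW Nk) | do !split].
Qed.
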